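(* Let $S$ be a connected surface without boundary, $K\subset S$ a compact connected set, and $U$ a residual domain of $K$. Let $\alpha:\,]0,1]\to U$ be a path such that $\lim_{t\to0}\alpha(t)=p\in K$ in $S$. Then there exists an ideal boundary point $b$ of $U$ which is relatively compact in $S$ such that $\lim_{t\to0}\alpha(t)=b$ in the ideal completion $B(U)$.
   Context: A residual domain of $K$ is a connected component of $S-K$. For a surface $X$, an ideal boundary component of $X$ is a decreasing sequence $V_1\supset V_2\supset\cdots$ of nonempty subsets of $X$ such that each $V_n$ is open in $X$ and connected, $cl_XV_n$ is not compact, $fr_XV_n$ is compact, and for every compact $C\subset X$ there is $n_0$ with $C\cap V_n=\emptyset$ for $n\ge n_0$; two such sequences $(V_n)$, $(V'_n)$ are equivalent if for every $n$ there is $m$ with $V_m\subset V'_n$, and vice versa. The ideal boundary $b(X)$ is the set of equivalence classes and $B(X)=X\sqcup b(X)$ is the ideal completion, with topology having as basis the sets $A\cup A'$, where $A\subset X$ is open connected with $fr_XA$ compact and $A'$ is the set of ideal boundary points represented by some $(V_n)$ with $V_n\subset A$ for all large $n$. An ideal boundary point of $U$ represented by $(V_n)$ is relatively compact in $S$ if some $V_n$ has compact closure in $S$. *)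

From HB Require Import structures.
From mathcomp Require Import all_boot all_order all_algebra.
From mathcomp Require Import all_classical all_reals all_analysis.
From mathcomp Require Import Rstruct Rstruct_topology.
Set Implicit Arguments. Unset Strict Implicit. Unset Printing Implicit Defensive.
Import Order.TTheory GRing.Theory Num.Theory.
Local Open Scope classical_set_scope.

Definition R2 := (Rdefinitions.R * Rdefinitions.R)%type.

Section Surfaces.
Context {S : topologicalType}.

Definition rel_open (X A : set S) := exists O : set S, open O /\ A = O `&` X.
Definition rel_closure (X A : set S) := closure A `&` X.
Definition rel_interior (X A : set S) :=
  \bigcup_(O in [set O | rel_open X O /\ O `<=` A]) O.
Definition rel_frontier (X A : set S) := rel_closure X A `\` rel_interior X A.

Definition ideal_bd_seq (X : set S) (V : nat -> set S) :=
  (forall n, V n.+1 `<=` V n) /\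
  (forall n, V n !=set0 /\ V n `<=` X /\ rel_open X (V n) /\ connected (V n) /\
             ~ compact (rel_closure X (V n)) /\ compact (rel_frontier X (V n))) /\
  (forall C : set S, compact C -> C `<=` X ->
     exists n0, forall n, (n0 <= n)%N -> C `&` V n = set0).

Definition ideal_bd_equiv (V V' : nat -> set S) :=
  (forall n, exists m, V m `<=` V' n) /\ (forall n, exists m, V' m `<=` V n).

Definition rel_compact_in_S (V : nat -> set S) := exists n, compact (closure (V n)).

(* Basic open neighbourhood A ∪ A' of the ideal point [V] in B(X):
   A open connected in X with compact frontier in X, and [V] ∈ A'. *)
Definition basic_nbhd_of_ideal (X : set S) (V : nat -> set S) (A : set S) :=
  A `<=` X /\ rel_open X A /\ connected A /\ compact (rel_frontier X A) /\
  exists V', ideal_bd_seq X V' /\ ideal_bd_equiv V V' /\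
             exists n0, forall n, (n0 <= n)%N -> V' n `<=` A.

Definition second_countable :=
  exists B : set (set S), countable B /\ (forall b, B b -> open b) /\
    forall O : set S, open O -> forall x, O x -> exists b, B b /\ b x /\ b `<=` O.

Definition locally_euclidean2 :=
  forall x : S, exists (O : set S) (W : set R2) (f : S -> R2) (g : R2 -> S),
    open O /\ O x /\ open W /\ f @` O = W /\
    {within O, continuous f} /\ {within W, continuous g} /\
    (forall y, O y -> g (f y) = y).

Definition surface := hausdorff_space S /\ second_countable /\ locally_euclidean2.

End Surfaces.

(* Exhaust [U] by compacts [L 0 ⊆ L 1 ⊆ ...] and let [V n] be the component
   of [U \ L n] containing a tail [alpha(]0, t_n])] of the path.  The [V n]
   decrease, eventually avoid every compact subset of [U], have compact
   frontiers in [U] (they lie in [L n]), and their closures contain [p ∉ U], so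
   they define an ideal boundary point, to which [alpha] converges.  It is
   relatively compact because the tails are taken inside a neighbourhood [W] of
   [K] with compact closure and [V 0] cannot leave [W]: the frontier of [W]
   inside [U] is put into [L 0]. *)

From Pilot Require Import Defs.
From HB Require Import structures.
From mathcomp Require Import all_boot all_order all_algebra.
From mathcomp Require Import all_classical all_reals all_analysis.
From mathcomp Require Import Rstruct Rstruct_topology.
Import Order.TTheory GRing.Theory Num.Theory.
Local Open Scope classical_set_scope.
Local Open Scope ring_scope.

Local Notation R := Rdefinitions.R.

Lemma open_setX {T U : topologicalType} (A : set T) (B : set U) :
  open A -> open B -> open (A `*` B).
Proof.
move=> oA oB; rewrite openE => -[a b] [/= Aa Bb].
by exists (A, B) => //=; split; apply: open_nbhs_nbhs.
Qed.

Lemma connected_setX {T U : topologicalType} (A : set T) (B : set U) :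
  connected A -> connected B -> connected (A `*` B).
Proof.
move=> cA cB.
have [[a0 Aa0]|nA] := pselect (A !=set0); last first.
  suff -> : A `*` B = set0 by exact: connected0.
  by apply/seteqP; split=> // -[x y] [/= Ax _]; apply: nA; exists x.
have [[b0 Bb0]|nB] := pselect (B !=set0); last first.
  suff -> : A `*` B = set0 by exact: connected0.
  by apply/seteqP; split=> // -[x y] [/= _ By]; apply: nB; exists y.
have -> : A `*` B =
    \bigcup_(a in A) ((fun y => (a, y)) @` B `|` (fun x => (x, b0)) @` A).
  apply/seteqP; split=> [[x y] [/= Ax By]|]; first by exists x => //; left; exists y.
  by move=> [x y] [a Aa [[y' By' [<- <-]]|[x' Ax' [<- <-]]]].
apply: bigcup_connected; first by exists (a0, b0) => a Aa; right; exists a0.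
move=> a Aa; apply: connectedU.
- by exists (a, b0); split; [exists b0|exists a].
- apply: connected_continuous_connected => //; apply: continuous_subspaceT.
  by move=> y; apply: cvg_pair; [exact: cvg_cst|exact: cvg_id].
- apply: connected_continuous_connected => //; apply: continuous_subspaceT.
  by move=> y; apply: cvg_pair; [exact: cvg_id|exact: cvg_cst].
Qed.

Lemma closure_sub_closed {T : topologicalType} (A C : set T) :
  closed C -> A `<=` C -> closure A `<=` C.
Proof. by move=> cC AC; rewrite (closure_id C).1 //; apply: closureS. Qed.

Lemma connected_sub_open {T : topologicalType} (A O : set T) :
  open O -> connected A -> A `&` O !=set0 -> A `&` closure O `<=` O -> A `<=` O.
Proof.
move=> oO cA [a [Aa Oa]] AclO.
have sep : separated O (~` closure O).
  split; first by rewrite setICr.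
  apply/seteqP; split => // y [Oy clCy].
  have [z [nclz Oz]] := clCy O (open_nbhs_nbhs (conj oO Oy)).
  by apply: nclz; apply: subset_closure.
have AOC : A `<=` O `|` ~` closure O.
  move=> y Ay; have [Oy|nOy] := pselect (O y); first by left.
  by right=> cly; apply: nOy; apply: AclO.
have [//|AC] := connected_subset sep AOC cA.
by case: (AC a Aa); apply: subset_closure.
Qed.

Lemma compact_cover_nat {T : topologicalType} {C : set T} {e : nat -> set T} :
  compact C -> (forall n, open (e n)) -> C `<=` \bigcup_n e n ->
  exists N, C `<=` \bigcup_(i < N) e i.
Proof.
move=> /compact_near_coveringP cC oe Ce.
have [|N _ HN] := cC nat \oo (fun i x => exists2 j, (j < i)%N & e j x).
  move=> x /Ce [j _ ejx]; exists (e j, [set i | (j < i)%N]) => /=.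
    by split; [apply: open_nbhs_nbhs; split | exists j.+1].
  by move=> [y i] [/= ejy ji]; exists j.
exists N => y Cy; have [j jN ejy] := HN N (leqnn N) y Cy.
by exists j.
Qed.

Lemma rel_interior_open {S : topologicalType} (X A : set S) :
  open A -> A `<=` X -> rel_interior X A = A.
Proof.
move=> oA AX; apply/seteqP; split=> [y [W [_ WA] Wy]|y Ay]; first exact: WA.
by exists A => //; split => //; exists A; split => //; rewrite setIidl.
Qed.

Lemma rel_closure_not_compact {S : topologicalType} (X A : set S) (p : S) :
  hausdorff_space S -> A `<=` X -> ~ X p -> closure A p ->
  ~ compact (rel_closure X A).
Proof.
move=> hausS AX Xp clAp cA; apply: Xp.
have : closure (rel_closure X A) p.
  by apply: closureS clAp => y Ay; split; [apply: subset_closure|apply: AX].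
by rewrite -(closure_id _).1 => [[]|]; last exact: compact_closed.
Qed.

Lemma basic_nbhd_of_ideal_sub {S : topologicalType} (X A : set S) (V : nat -> set S) :
  basic_nbhd_of_ideal X V A -> exists n, V n `<=` A.
Proof.
move=> [_ [_ [_ [_ [V' [_ [[VV' _] [n0 V'A]]]]]]]].
by have [m Vm] := VV' n0; exists m => y /Vm; apply: V'A.
Qed.

Lemma at_right0_decreasing_times {T : topologicalType} {f : R -> T} {p : T}
    (N : nat -> set T) :
  f @ 0^'+ --> p -> (forall n, nbhs p (N n)) ->
  exists tt : nat -> R, [/\ forall n, 0 < tt n <= 1, forall n, tt n.+1 <= tt n
    & forall n t, 0 < t <= tt n -> N n (f t)].
Proof.
move=> fp Np.
have /choice [s s_spec] n : exists s : R, 0 < s <= 1 /\ forall t, 0 < t <= s -> N n (f t).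
  have /nbhs_ballP [d /= d0 fN] := fp _ (Np n).
  have d20 : 0 < d / 2 by rewrite divr_gt0.
  exists (Num.min (d / 2) 1); split; first by rewrite lt_min d20 ltr01 ge_min lexx orbT.
  move=> t /andP [t0 tle]; apply: fN => //.
  rewrite /ball /= sub0r normrN gtr0_norm //; apply: (le_lt_trans tle).
  by rewrite gt_min ltr_pdivrMr // ltr_pMr // ltr1n.
pose tt := fix tt n := if n is m.+1 then Num.min (tt m) (s m.+1) else s 0%N.
have tt_s n : tt n <= s n by case: n => [|n] /=; rewrite ?ge_min lexx ?orbT.
have tt_gt0 n : 0 < tt n.
  elim: n => [|n IH] /=; first by case/andP: (s_spec 0%N).1.
  by rewrite lt_min IH; case/andP: (s_spec n.+1).1.
exists tt; split=> [n|n|n t /andP [t0 tn]].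
- by rewrite tt_gt0 (le_trans (tt_s n)) //; case/andP: (s_spec n).1.
- by rewrite /= ge_min lexx.
- by apply: (s_spec n).2; rewrite t0 (le_trans tn).
Qed.

Lemma R2_ballE (z : R2) (e : R) : ball z e = ball z.1 e `*` ball z.2 e.
Proof. by []. Qed.

Lemma open_R2_ball (z : R2) (e : R) : open (ball z e).
Proof. by rewrite R2_ballE; apply: open_setX; apply: (@ball_open _ R^o). Qed.

Lemma connected_R2_ball (z : R2) (e : R) : connected (ball z e).
Proof.
rewrite R2_ballE; apply: connected_setX; rewrite ball_itv.
  by apply/connected_intervalP; apply: interval_is_interval.
by apply/connected_intervalP; apply: interval_is_interval.
Qed.

Lemma R2_ball_sub_compact (z : R2) (e : R) : 0 < e ->
  exists C : set R2, [/\ compact C, ball z (e / 2) `<=` C & C `<=` ball z e].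
Proof.
move=> e0; have e20 : 0 < e / 2 by rewrite divr_gt0.
have e2e : e / 2 < e by rewrite ltr_pdivrMr // ltr_pMr // ltr1n.
exists (closed_ball z.1 (e / 2) `*` closed_ball z.2 (e / 2)); split.
- by apply: compact_setX; apply: closed_ballR_compact.
- by move=> [x y] [/= H1 H2]; split; apply: subset_closed_ball.
- by move=> [x y] [/= H1 H2]; split; apply: (closed_ball_subset e20 e2e).
Qed.

Definition compact_exhaustion {S : topologicalType} (U : set S) (L : nat -> set S) :=
  [/\ forall n, compact (L n), forall n, L n `<=` U,
      {homo L : m n / (m <= n)%N >-> m `<=` n} &
      forall C, compact C -> C `<=` U -> exists n, C `<=` (L n)°].

Section Surface.
Context {S : topologicalType}.
Hypothesis hausS : hausdorff_space S.
Hypothesis eucS : locally_euclidean2 (S := S).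

Lemma locally_euclidean2_nbhs {P : set S} {x : S} : open P -> P x ->
  exists Q, [/\ open Q, Q x, connected Q, compact (closure Q) & closure Q `<=` P].
Proof.
move=> oP Px.
have [Oc [Wc [f [g [oOc [Ox [oWc [fOW [cf [cg gf]]]]]]]]]] := eucS x.
have cf' : {in Oc, continuous f} by rewrite -continuous_open_subspace.
have cg' : {in Wc, continuous g} by rewrite -continuous_open_subspace.
have Wfx : Wc (f x) by rewrite -fOW; exists x.
have [e e0 eWP] : exists2 e : R, 0 < e & ball (f x) e `<=` Wc `&` g @^-1` P.
  have oWP : open (Wc `&` g @^-1` P) by apply: (continuous_inP _ oWc).1 cg' _ oP.
  have /nbhs_ballP[e e0 eWP] : nbhs (f x) (Wc `&` g @^-1` P).
    by apply: open_nbhs_nbhs; split => //; rewrite /= gf.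
  by exists e.
have [C [cC bC CWP]] := R2_ball_sub_compact (f x) e e0.
have CW : C `<=` Wc by move=> y /CWP /eWP [].
have gC : compact (g @` C) by apply: continuous_compact (continuous_subspaceW CW cg) cC.
set D := ball (f x) (e / 2).
have DW : D `<=` Wc by move=> y /bC /CW.
have gDE : g @` D = Oc `&` f @^-1` D.
  apply/seteqP; split=> [_ [y Dy <-]|z [Oz Dfz]]; last by exists (f z); rewrite ?gf.
  have : Wc y by apply: DW.
  by rewrite -fOW => -[z Oz fzy]; subst y; rewrite /= (gf z Oz).
have clgD : closure (g @` D) `<=` g @` C.
  apply: closure_sub_closed; first exact: compact_closed.
  by move=> _ [y /bC Cy <-]; exists y.
exists (g @` D); split.
- by rewrite gDE; apply: (continuous_inP _ oOc).1 cf' _ (open_R2_ball _ _).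
- by exists (f x); [apply: ballxx; rewrite divr_gt0 | rewrite gf].
- apply: connected_continuous_connected (connected_R2_ball _ _) _.
  exact: continuous_subspaceW DW cg.
- exact: subclosed_compact (@closed_closure _ _) gC clgD.
- by move=> y /clgD [z /CWP /eWP [_ Pgz] <-].
Qed.

Lemma open_connected_component (A : set S) (x : S) :
  open A -> open (connected_component A x).
Proof.
move=> oA; rewrite openE => y Axy.
have [Q [oQ Qy cQ _ clQA]] := locally_euclidean2_nbhs oA (connected_component_sub Axy).
apply: (@filterS _ _ _ Q); last exact: open_nbhs_nbhs.
rewrite (same_connected_component Axy); apply: connected_component_max Qy _ cQ.
by move=> w Qw; apply/clQA/subset_closure.
Qed.

Lemma closureI_connected_component (A : set S) (x : S) : open A ->
  closure (connected_component A x) `&` A `<=` connected_component A x.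
Proof.
move=> oA y [cly Ay].
have [w [Axw Ayw]] := cly _ (open_nbhs_nbhs
  (conj (@open_connected_component A y oA) (connected_component_refl Ay))).
by apply: connected_component_trans Axw _; apply: connected_component_sym.
Qed.

Lemma compact_frontierI_component {K O : set S} (x : S) :
  closed K -> K `<=` O -> open O -> compact (closure O) ->
  compact ((closure O `\` O) `&` connected_component (~` K) x).
Proof.
move=> clK KO oO cO; set U := connected_component (~` K) x.
have -> : (closure O `\` O) `&` U = (closure O `&` ~` O) `&` closure U.
  apply/seteqP; split=> y [[clOy nOy] Uy]; split=> //; first exact: subset_closure.
  by apply: (closureI_connected_component _ _ (closed_openC clK)); split=> // /KO.
apply: compact_closedI; last exact: closed_closure.
by apply: compact_closedI => //; apply: open_closedC.
Qed.

Lemma components_ideal_bd_seq {U : set S} {L V : nat -> set S} {p : S} :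
  open U -> ~ U p -> compact_exhaustion U L ->
  (forall n, exists2 x, (U `&` ~` L n) x &
     V n = connected_component (U `&` ~` L n) x) ->
  (forall n, V n.+1 `<=` V n) -> (forall n, closure (V n) p) ->
  ideal_bd_seq U V.
Proof.
move=> oU Up [cL LU L_mono absorbL] Vcomp Vdecr clVp.
have oUL n : open (U `&` ~` L n).
  exact: openI oU (closed_openC (compact_closed hausS (cL n))).
have VUL n : V n `<=` U `&` ~` L n.
  by have [x _ ->] := Vcomp n; apply: connected_component_sub.
have oV n : open (V n).
  by have [x _ ->] := Vcomp n; apply: open_connected_component.
have VU n : V n `<=` U by move=> y /VUL [].
have frontierE n : rel_frontier U (V n) = (closure (V n) `&` ~` V n) `&` L n.
  rewrite /rel_frontier rel_interior_open //; apply/seteqP; split=> y.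
    move=> [[cly Uy] nVy]; split=> //; apply: contrapT => nLy; apply: nVy.
    have [x _ Vn] := Vcomp n; rewrite Vn in cly *.
    exact: closureI_connected_component.
  by move=> [[cly nVy] /LU Uy].
split; [exact: Vdecr|split=> [n|C cC CU]].
- split; first by have [x ULx ->] := Vcomp n; exists x; apply: connected_component_refl.
  split; first exact: VU.
  split; first by exists (V n); split => //; rewrite setIidl.
  split; first by have [x _ ->] := Vcomp n; apply: component_connected.
  split; first exact: rel_closure_not_compact hausS (VU n) Up (clVp n).
  rewrite frontierE setIC; apply: compact_closedI => //.
  by apply: closedI; [exact: closed_closure|exact: open_closedC].
- have [N /subset_trans /(_ (@interior_subset _ _)) CN] := absorbL C cC CU.
  exists N => n Nn; apply/seteqP; split => // y.
  by move=> [/CN /(L_mono _ _ Nn) Lny /VUL []].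
Qed.

Section SecondCountable.
Hypothesis scS : Defs.second_countable (S := S).

Lemma base_compact_closure {B : set (set S)} {P : set S} {x : S} :
  (forall O : set S, open O -> forall y, O y -> exists b, B b /\ b y /\ b `<=` O) ->
  open P -> P x -> exists b, [/\ B b, b x, compact (closure b) & closure b `<=` P].
Proof.
move=> baseB oP Px; have [Q [oQ Qx _ cQ QP]] := locally_euclidean2_nbhs oP Px.
have [b [Bb [bx bQ]]] := baseB _ oQ _ Qx.
have clbQ : closure b `<=` closure Q := closureS bQ.
exists b; split => //; last by move=> y /clbQ /QP.
exact: subclosed_compact (@closed_closure _ _) cQ clbQ.
Qed.

Lemma exists_compact_exhaustion {U L0 : set S} : open U -> compact L0 -> L0 `<=` U ->
  exists2 L : nat -> set S, compact_exhaustion U L & L0 `<=` L 0%N.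
Proof.
move=> oU cL0 L0U; have [B [countB [openB baseB]]] := scS.
pose G := [set b | [/\ B b, compact (closure b) & closure b `<=` U]].
have /pcard_surjP [g gG] : countable G.
  by apply: sub_countable countB; apply: subset_card_le => b [].
(* [g] enumerates [G] but is arbitrary off its preimage; cut it down to [set0]. *)
pose e n := if pselect (G (g n)) is left _ then g n else set0.
have eG n : e n = set0 \/ G (e n) by rewrite /e; case: pselect; [right|left].
have oe n : open (e n) by case: (eG n) => [->|[/openB //]]; exact: open0.
have ce n : compact (closure (e n)).
  by case: (eG n) => [->|[]] //; rewrite closure0; exact: compact0.
have eU n : closure (e n) `<=` U by case: (eG n) => [->|[]] //; rewrite closure0.
have Ue : U `<=` \bigcup_n e n.
  move=> y Uy; have [b [Bb by_ cb bU]] := base_compact_closure baseB oU Uy.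
  have [n _ gnb] := gG b (And3 Bb cb bU).
  by exists n => //; rewrite /e; case: pselect => [_|]; rewrite gnb // => -[].
exists (fun n => L0 `|` \bigcup_(i < n) closure (e i)); last by move=> y L0y; left.
split.
- move=> n; apply: compactU cL0 _; rewrite bigcup_mkord.
  by apply: bigsetU_compact => i _.
- by move=> n y [/L0U|[i _ /eU]].
- move=> m n mn y [L0y|[i im ey]]; [by left|right; exists i => //].
  by rewrite /= in im *; apply: leq_trans mn.
- move=> C cC CU; have [N CN] := compact_cover_nat cC oe (subset_trans CU Ue).
  exists N; apply: (subset_trans CN); rewrite -open_subsetE.
    by move=> y [i iN ey]; right; exists i => //; apply: subset_closure.
  by apply: bigcup_open => i _.
Qed.

Lemma compact_open_nbhs_closure {K : set S} : compact K ->
  exists O : set S, [/\ open O, K `<=` O & compact (closure O)].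
Proof.
move=> cK.
have [L [cL _ _ absorbL] _] := exists_compact_exhaustion openT compact0 (sub0set _).
have [n KLn] := absorbL K cK (subsetT _).
exists (L n)°; split => //; first exact: open_interior.
apply: subclosed_compact (@closed_closure _ _) (cL n) _.
exact: closure_sub_closed (compact_closed hausS (cL n)) (@interior_subset _ _).
Qed.

End SecondCountable.
End Surface.

Section TailComponents.
Context {S : topologicalType} {U : set S} {L : nat -> set S} {alpha : R -> S}
  {tt : nat -> R}.
Hypothesis alpha_cont : {within `]0, 1], continuous alpha}.
Hypothesis tt_itv : forall n, 0 < tt n <= 1.
Hypothesis alpha_tail : forall n t, 0 < t <= tt n -> (U `&` ~` L n) (alpha t).

Let V n := connected_component (U `&` ~` L n) (alpha (tt n)).

Lemma tail_sub_component n t : 0 < t <= tt n -> V n (alpha t).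
Proof.
move=> t_itv.
have tail_conn : connected (alpha @` `]0, tt n]).
  apply: connected_continuous_connected.
    by apply/connected_intervalP; exact: interval_is_interval.
  apply: continuous_subspaceW alpha_cont => u; rewrite /= !in_itv /= => /andP [u0 ule].
  by rewrite u0 (le_trans ule) //; case/andP: (tt_itv n).
apply: (connected_component_max _ _ tail_conn).
- by exists (tt n) => //; rewrite /= in_itv /= lexx andbT; case/andP: (tt_itv n).
- by move=> y [u]; rewrite /= in_itv /= => /alpha_tail ULu <-.
- by exists t => //; rewrite /= in_itv /=.
Qed.

Lemma tail_component_decr :
  (forall n, tt n.+1 <= tt n) -> {homo L : m n / (m <= n)%N >-> m `<=` n} ->
  forall n, V n.+1 `<=` V n.
Proof.
move=> tt_decr L_mono n; have Vn : V n (alpha (tt n.+1)).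
  by apply: tail_sub_component; case/andP: (tt_itv n.+1) => -> _; apply: tt_decr.
rewrite /V (same_connected_component Vn); apply: connected_component_max.
- apply: connected_component_refl; apply: alpha_tail.
  by rewrite lexx andbT; case/andP: (tt_itv n.+1).
- move=> y /connected_component_sub [Uy nLy]; split=> // Ly; apply: nLy.
  exact: L_mono (leqnSn n) _ Ly.
- exact: component_connected.
Qed.

Lemma near_tail_component n : \forall t \near 0^'+, V n (alpha t).
Proof.
apply/nbhs_ballP; exists (tt n) => [|t]; first by case/andP: (tt_itv n).
rewrite /ball /= sub0r normrN => tn t0; apply: tail_sub_component.
by rewrite t0 ltW // -(gtr0_norm t0).
Qed.

End TailComponents.

Lemma path_end_ideal_bd_seq {S : topologicalType} {U W : set S} {L : nat -> set S}
    {alpha : R -> S} {p : S} :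
  hausdorff_space S -> locally_euclidean2 (S := S) ->
  open U -> ~ U p -> open W -> W p ->
  compact_exhaustion U L -> (closure W `\` W) `&` U `<=` L 0%N ->
  {within `]0, 1], continuous alpha} -> (forall t, `]0, 1]%classic t -> U (alpha t)) ->
  alpha @ 0^'+ --> p ->
  exists V : nat -> set S, [/\ ideal_bd_seq U V, V 0%N `<=` W &
    forall n, \forall t \near 0^'+, V n (alpha t)].
Proof.
move=> hausS eucS oU Up oW Wp exhL L0W alpha_cont alphaU alpha_p.
have [cL LU L_mono _] := exhL.
have nbhs_p n : nbhs p (W `&` ~` L n).
  apply: open_nbhs_nbhs; split; last by split=> // /LU.
  exact: openI oW (closed_openC (compact_closed hausS (cL n))).
have [tt [tt_itv tt_decr tt_alpha]] := at_right0_decreasing_times _ alpha_p nbhs_p.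
have alpha_tail n t : 0 < t <= tt n -> (U `&` ~` L n) (alpha t).
  move=> t_itv; split; last exact: (tt_alpha n t t_itv).2.
  apply: alphaU; rewrite /= in_itv /=; case/andP: t_itv => -> tn.
  by rewrite (le_trans tn) //; case/andP: (tt_itv n).
have nearV := near_tail_component alpha_cont tt_itv alpha_tail.
have tt_self n : 0 < tt n <= tt n by rewrite lexx andbT; case/andP: (tt_itv n).
exists (fun n => connected_component (U `&` ~` L n) (alpha (tt n))); split.
- apply: (components_ideal_bd_seq hausS eucS oU Up exhL).
  + by move=> n; exists (alpha (tt n)) => //; apply: alpha_tail.
  + exact: tail_component_decr alpha_cont tt_itv alpha_tail tt_decr L_mono.
  + move=> n; apply: closed_cvg (@closed_closure _ _) _ _ alpha_p.
    by apply: filterS (nearV n) => t; apply: subset_closure.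
- apply: connected_sub_open oW (@component_connected _ _ _) _ _.
    exists (alpha (tt 0%N)); split; last exact: (tt_alpha _ _ (tt_self 0%N)).1.
    exact: tail_sub_component alpha_cont tt_itv alpha_tail _ _ (tt_self 0%N).
  move=> y [V0y clWy]; apply: contrapT => nWy.
  have [Uy nL0y] := connected_component_sub V0y.
  by apply/nL0y/L0W.
- exact: nearV.
Qed.

Theorem proposition4p2 (S : topologicalType) (K U : set S) (alpha : Rdefinitions.R -> S) (p : S) :
  surface (S := S) -> connected [set: S] ->
  compact K -> connected K ->
  (exists x, (~` K) x /\ U = connected_component (~` K) x) ->
  {within `]0, 1]%classic, continuous alpha} ->
  (forall t, `]0, 1]%classic t -> U (alpha t)) ->
  K p ->
  alpha @ 0^'+ --> p ->
  exists V : nat -> set S,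
    ideal_bd_seq U V /\ rel_compact_in_S V /\
    forall A : set S, basic_nbhd_of_ideal U V A ->
      \forall t \near 0^'+, A (alpha t).
Proof.
move=> [hausS [scS eucS]] _ cK _ [x0 [_ Ucomp]] alpha_cont alphaU Kp alpha_p.
have clK := compact_closed hausS cK.
have oU : open U.
  by rewrite Ucomp; apply: open_connected_component => //; apply: closed_openC.
have Up : ~ U p by rewrite Ucomp => /connected_component_sub; apply.
have [W [oW KW cW]] := compact_open_nbhs_closure hausS eucS scS cK.
have cL0 : compact ((closure W `\` W) `&` U).
  by rewrite Ucomp; apply: compact_frontierI_component.
have [L exhL L0L] := exists_compact_exhaustion hausS eucS scS oU cL0 (@subIsetr _ _ _).
have [V [idealV V0W nearV]] :=
  path_end_ideal_bd_seq hausS eucS oU Up oW (KW p Kp) exhL L0L alpha_cont alphaU alpha_p.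
exists V; split => //; split.
- by exists 0%N; apply: subclosed_compact (@closed_closure _ _) cW (closureS V0W).
- by move=> A /basic_nbhd_of_ideal_sub [n VA]; apply: filterS (nearV n) => t /VA.
Qed.
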